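(* Consider the optimization problem over user association $\mathbf{x}=(x_{ij})$, resource allocation $\mathbf{y}=(y_{ij})$ and power $\mathbf{p}=(p_i)$, $i\in\mathcal I=\{1,\dots,I\}$, $j\in\mathcal J=\{1,\dots,J\}$: \[ \max_{\mathbf x,\mathbf y,\mathbf p}\ \sum_{j\in\mathcal J}\omega_j\log_2\Big(KB\sum_{i\in\mathcal I}y_{ij}\log_2(1+\eta_{ij})\Big) \] subject to $\eta_{ij}=\dfrac{p_i g_{ij}}{\sum_{k\in\mathcal I\setminus\{i\}}d_k p_k g_{kj}+\sigma^2}$ for all $i,j$; $\sum_{i\in\mathcal I}x_{ij}=1$ for all $j$; $d_i=\sum_{j\in\mathcal J}y_{ij}$ for all $i$; $0\le p_i\le P_i$ for all $i$; $0\le d_i\le 1$ for all $i$; $0\le y_{ij}\le x_{ij}$ and $x_{ij}\in\{0,1\}$ for all $i,j$. Then at an optimal solution $(\mathbf x^*,\mathbf y^*,\mathbf p^* )$ the load of every BS is binary: $d_i^*=\sum_{j\in\mathcal J}y^*_{ij}\in\{0,1\}$ for all $i\in\mathcal I$; i.e., each BS operates either at full load ($d_i^*=1$) or at zero load ($d_i^*=0$).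
   Context: Downlink heterogeneous network with $I$ base stations (BSs) and $J$ users. $x_{ij}\in\{0,1\}$ indicates that user $j$ is associated with BS $i$; $y_{ij}$ is the fraction of time-frequency resource blocks BS $i$ allocates to user $j$; $d_i$ is the load of BS $i$; $p_i$ is the per-resource-block transmit power of BS $i$ with maximum $P_i>0$. The constants $K>0$, $B>0$, channel gains $g_{ij}>0$, noise power $\sigma^2>0$ and user priorities $\omega_j>0$ are given. $\eta_{ij}$ is the (load-coupled) average SINR of user $j$ served by BS $i$. *)

From mathcomp Require Import all_boot all_order all_algebra.
From mathcomp Require Import all_classical all_reals all_analysis.
Set Implicit Arguments. Unset Strict Implicit. Unset Printing Implicit Defensive.
Import Order.TTheory GRing.Theory Num.Theory.
Local Open Scope ring_scope.

Section HetNet.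
Variables (R : realType) (nI nJ : nat).

Definition log2 (x : R) : R := ln x / ln 2.

Definition load (y : 'I_nI -> 'I_nJ -> R) (i : 'I_nI) : R := \sum_(j < nJ) y i j.

Definition sinr (g : 'I_nI -> 'I_nJ -> R) (sigma2 : R)
  (y : 'I_nI -> 'I_nJ -> R) (p : 'I_nI -> R) (i : 'I_nI) (j : 'I_nJ) : R :=
  p i * g i j / (\sum_(k < nI | k != i) load y k * p k * g k j + sigma2).

Definition rate (K B : R) (g : 'I_nI -> 'I_nJ -> R) (sigma2 : R)
  (y : 'I_nI -> 'I_nJ -> R) (p : 'I_nI -> R) (j : 'I_nJ) : R :=
  K * B * \sum_(i < nI) y i j * log2 (1 + sinr g sigma2 y p i j).

(* objective sum_j omega_j log2 (rate_j)  (only meaningful when all rates > 0) *)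
Definition utility (K B : R) (g : 'I_nI -> 'I_nJ -> R) (sigma2 : R)
  (omega : 'I_nJ -> R) (y : 'I_nI -> 'I_nJ -> R) (p : 'I_nI -> R) : R :=
  \sum_(j < nJ) omega j * log2 (rate K B g sigma2 y p j).

Definition feasible (Pmax : 'I_nI -> R) (x : 'I_nI -> 'I_nJ -> bool)
  (y : 'I_nI -> 'I_nJ -> R) (p : 'I_nI -> R) : Prop :=
  [/\ (forall j, \sum_(i < nI) (x i j)%:R = 1 :> R),
      (forall i, 0 <= p i <= Pmax i),
      (forall i, 0 <= load y i <= 1) &
      (forall i j, 0 <= y i j <= (x i j)%:R)].

(* optimality, with the convention log2 0 = -infinity: an optimal solution
   has finite objective (all rates positive), and its objective dominates
   every feasible point with finite objective (feasible points with some
   zero rate have objective -infinity). *)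
Definition optimal (K B : R) (g : 'I_nI -> 'I_nJ -> R) (sigma2 : R)
  (omega : 'I_nJ -> R) (Pmax : 'I_nI -> R) (x : 'I_nI -> 'I_nJ -> bool)
  (y : 'I_nI -> 'I_nJ -> R) (p : 'I_nI -> R) : Prop :=
  [/\ feasible Pmax x y p,
      (forall j, 0 < rate K B g sigma2 y p j) &
      (forall x' y' p', feasible Pmax x' y' p' ->
         (forall j, 0 < rate K B g sigma2 y' p' j) ->
         utility K B g sigma2 omega y' p' <= utility K B g sigma2 omega y p)].

End HetNet.

(* If some BS i0 had load 0 < d < 1, let it spread its allocations over all
   its resource blocks (y_{i0 j} / d) at power d p_{i0}.  The product d_{i0} p_{i0},
   which is all the other users see of BS i0, is unchanged, so every other term
   of every rate stays the same; a user of i0 now gets SINR d eta on 1/d times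
   as many blocks, and strict concavity, d log(1 + eta) < log(1 + d eta), makes
   this a strict gain whenever y_{i0 j} > 0 and eta > 0.  A user with
   y_{i0 j} > 0 is served by i0 alone, so its positive rate forces eta > 0: the
   new point is feasible with larger utility, contradicting optimality. *)

From mathcomp Require Import all_boot all_order all_algebra.
From mathcomp Require Import all_classical all_reals all_analysis.
From mathcomp Require Import ring lra.
Set Implicit Arguments. Unset Strict Implicit. Unset Printing Implicit Defensive.
Import Order.TTheory GRing.Theory Num.Theory.
Local Open Scope ring_scope.

Lemma ler_ltr_sum (R : numDomainType) (I : finType) (F G : I -> R) (i0 : I) :
  (forall i, F i <= G i) -> F i0 < G i0 -> \sum_i F i < \sum_i G i.
Proof.
move=> leFG ltFG0; rewrite (bigD1 i0) //= [ltRHS](bigD1 i0) //=.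
by rewrite ltr_leD // ler_sum.
Qed.

Section Logarithm.
Variable R : realType.

Lemma lt_ln1Dx (x : R) : -1 < x -> x != 0 -> ln (1 + x) < x.
Proof.
move=> x_gtN1 x_neq0; have x1_gt0 : 0 < 1 + x by lra.
have ln_neq0 : ln (1 + x) != 0.
  by rewrite ln_eq0 // -subr_eq0 addrAC subrr add0r.
by have := expR_gt1Dx ln_neq0; rewrite lnK ?posrE // ltrD2l.
Qed.

Lemma lt_mul_ln1D (d c : R) : 0 < d < 1 -> 0 < c ->
  d * ln (1 + c) < ln (1 + d * c).
Proof.
move=> /andP[d_gt0 d_lt1] c_gt0.
set a := 1 + d * c; have a_gt0 : 0 < a by rewrite /a; nra.
have a_neq0 : a != 0 by rewrite gt_eqF.
set r := (1 + c) / a; have r_gt0 : 0 < r by rewrite divr_gt0 //; lra.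
have r_sub1 : r - 1 = (1 - d) * c / a by rewrite /r /a; field.
have ln_r : ln r < (1 - d) * c / a.
  have r_sub1_neq0 : r - 1 != 0.
    by rewrite r_sub1 !mulf_neq0 ?invr_eq0 // lt0r_neq0 // subr_gt0.
  by rewrite -r_sub1 -{1}(addrNK 1 r) addrC lt_ln1Dx //; lra.
have ln_a : d * c / a <= ln a.
  have ainv_gt0 : 0 < a^-1 by rewrite invr_gt0.
  have /le_ln1Dx : -1 < a^-1 - 1 by lra.
  rewrite addrCA subrr addr0 lnV ?posrE //.
  have -> : d * c / a = 1 - a^-1 by rewrite /a; field.
  lra.
have -> : 1 + c = a * r by rewrite /r mulrC divfK.
rewrite lnM ?posrE //.
nra.
Qed.

Lemma inv_ln2_gt0 : 0 < (ln 2 : R)^-1.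
Proof. by rewrite invr_gt0 ln_gt0 // ltr1n. Qed.

Lemma ltr_log2 : {in Num.pos &, {mono @log2 R : a b / a < b}}.
Proof. by move=> a b a_gt0 b_gt0; rewrite ltr_pM2r ?inv_ln2_gt0 // ltr_ln. Qed.

Lemma ler_log2 : {in Num.pos &, {mono @log2 R : a b / a <= b}}.
Proof. by move=> a b a_gt0 b_gt0; rewrite ler_pM2r ?inv_ln2_gt0 // ler_ln. Qed.

Lemma log2_1 : log2 (1 : R) = 0.
Proof. by rewrite /log2 ln1 mul0r. Qed.

Lemma lt_mul_log2_1D (d c : R) : 0 < d < 1 -> 0 < c ->
  d * log2 (1 + c) < log2 (1 + d * c).
Proof.
by move=> d01 c_gt0; rewrite /log2 mulrA ltr_pM2r ?inv_ln2_gt0 // lt_mul_ln1D.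
Qed.

Lemma lt_scaled_log2_1D (d u c : R) : 0 < d < 1 -> 0 < u -> 0 < c ->
  u * log2 (1 + c) < u / d * log2 (1 + d * c).
Proof.
move=> d01 u_gt0 c_gt0; have d_gt0 : 0 < d by case/andP: d01.
have -> : u * log2 (1 + c) = u / d * (d * log2 (1 + c)).
  by rewrite mulrA divfK // lt0r_neq0.
rewrite ltr_pM2l ?divr_gt0 //.
exact: lt_mul_log2_1D.
Qed.

Lemma le_scaled_log2_1D (d u c : R) : 0 < d < 1 -> 0 <= u -> 0 <= c ->
  u * log2 (1 + c) <= u / d * log2 (1 + d * c).
Proof.
move=> d01 u_ge0 c_ge0.
have [->|u_neq0] := eqVneq u 0; first by rewrite !mul0r.
have [->|c_neq0] := eqVneq c 0; first by rewrite mulr0 addr0 log2_1 !mulr0.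
by rewrite ltW // lt_scaled_log2_1D // lt0r ?u_neq0 ?c_neq0.
Qed.

End Logarithm.

Section Network.
Variables (R : realType) (nI nJ : nat).
Implicit Types (K B : R) (g y : 'I_nI -> 'I_nJ -> R) (p Pmax : 'I_nI -> R).
Implicit Types (x : 'I_nI -> 'I_nJ -> bool).

Definition fill_alloc y i0 : 'I_nI -> 'I_nJ -> R :=
  fun k j => if k == i0 then y k j / load y i0 else y k j.

Definition fill_power y p i0 : 'I_nI -> R :=
  fun k => if k == i0 then load y i0 * p k else p k.

Lemma load_fill_alloc y i0 k : load y i0 != 0 ->
  load (fill_alloc y i0) k = if k == i0 then 1 else load y k.
Proof.
move=> D_neq0; rewrite /load /fill_alloc.
by case: eqP => // ->; rewrite -mulr_suml divff.
Qed.

Lemma load_mul_fill_power y p i0 k : load y i0 != 0 ->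
  load (fill_alloc y i0) k * fill_power y p i0 k = load y k * p k.
Proof.
move=> D_neq0; rewrite load_fill_alloc // /fill_power.
by case: eqP => // ->; rewrite mul1r.
Qed.

Lemma sinr_fill g (sigma2 : R) y p i0 k j : load y i0 != 0 ->
  sinr g sigma2 (fill_alloc y i0) (fill_power y p i0) k j
  = (if k == i0 then load y i0 else 1) * sinr g sigma2 y p k j.
Proof.
move=> D_neq0; rewrite /sinr; under eq_bigr do rewrite load_mul_fill_power //.
by rewrite /fill_power; case: eqP => _; rewrite ?mul1r // !mulrA.
Qed.

Lemma feasible_sinr_ge0 g (sigma2 : R) Pmax x y p k j :
  (forall i j, 0 <= g i j) -> 0 <= sigma2 -> feasible Pmax x y p ->
  0 <= sinr g sigma2 y p k j.
Proof.
move=> g_ge0 sigma2_ge0 [_ p_bounds load_bounds _].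
have p_ge0 i : 0 <= p i by case/andP: (p_bounds i).
have load_ge0 i : 0 <= load y i by case/andP: (load_bounds i).
by rewrite divr_ge0 ?mulr_ge0 // addr_ge0 // sumr_ge0 // => i _; rewrite !mulr_ge0.
Qed.

Lemma feasible_single_server Pmax x y p i j k : feasible Pmax x y p ->
  0 < y i j -> k != i -> y k j = 0.
Proof.
move=> [x_assoc _ _ y_bounds] y_gt0 k_neq_i.
have x_ij : x i j.
  case/andP: (y_bounds i j) => _; case: (x i j) => // y_le0.
  by move: y_gt0; rewrite ltNge y_le0.
have others0 : \sum_(l < nI | l != i) (x l j)%:R = 0 :> R.
  by move: (x_assoc j); rewrite (bigD1 i) //= x_ij -[X in _ = X]addr0 => /addrI.
have x_kj := psumr_eq0P (fun l _ => ler0n _ (x l j)) others0 k_neq_i.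
case/andP: (y_bounds k j); rewrite x_kj => y_ge0 y_le0.
by apply/eqP; rewrite eq_le y_ge0 y_le0.
Qed.

Lemma rate_single_server K B g (sigma2 : R) y p i j :
  (forall k, k != i -> y k j = 0) ->
  rate K B g sigma2 y p j = K * B * (y i j * log2 (1 + sinr g sigma2 y p i j)).
Proof.
move=> y_others; rewrite /rate (bigD1 i) //= big1 ?addr0 // => k /y_others ->.
by rewrite mul0r.
Qed.

Lemma served_sinr_gt0 K B g (sigma2 : R) Pmax x y p i j :
  (forall i j, 0 <= g i j) -> 0 <= sigma2 -> feasible Pmax x y p ->
  0 < y i j -> 0 < rate K B g sigma2 y p j -> 0 < sinr g sigma2 y p i j.
Proof.
move=> g_ge0 sigma2_ge0 feas y_gt0 rate_gt0.
rewrite lt_neqAle (feasible_sinr_ge0 i j g_ge0 sigma2_ge0 feas) andbT.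
apply: contraTneq rate_gt0 => sinr0.
have served_by_i k : k != i -> y k j = 0 := feasible_single_server feas y_gt0.
rewrite (rate_single_server K B g sigma2 p served_by_i) -sinr0.
by rewrite addr0 log2_1 !mulr0 ltxx.
Qed.

Lemma feasible_fill Pmax x y p i0 : feasible Pmax x y p -> 0 < load y i0 ->
  feasible Pmax x (fill_alloc y i0) (fill_power y p i0).
Proof.
move=> [x_assoc p_bounds load_bounds y_bounds] D_gt0.
have D_neq0 := lt0r_neq0 D_gt0.
split => // [k|k|k j].
- rewrite /fill_power; case: eqP => // ->.
  case/andP: (p_bounds i0) (load_bounds i0) => p_ge0 p_le /andP[_ D_le1].
  by rewrite mulr_ge0 ?(ltW D_gt0) //= (le_trans _ p_le) // ler_piMl.
- by rewrite load_fill_alloc //; case: eqP => // _; rewrite ler01 lexx.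
- rewrite /fill_alloc; case: eqP => // ->.
  case/andP: (y_bounds i0 j) => y_ge0 y_le_x; rewrite divr_ge0 ?(ltW D_gt0) //=.
  rewrite ler_pdivrMr //; case: (x i0 j) y_le_x => /= y_le; last by rewrite mul0r.
  rewrite mul1r /load (bigD1 j) //= lerDl sumr_ge0 // => l _.
  by case/andP: (y_bounds i0 l).
Qed.

Section FillUp.
Variables (K B sigma2 : R) (g : 'I_nI -> 'I_nJ -> R) (Pmax : 'I_nI -> R).
Variables (x : 'I_nI -> 'I_nJ -> bool) (y : 'I_nI -> 'I_nJ -> R) (p : 'I_nI -> R).
Variable i0 : 'I_nI.
Hypotheses (KB_gt0 : 0 < K * B) (g_ge0 : forall i j, 0 <= g i j).
Hypotheses (sigma2_ge0 : 0 <= sigma2) (feas : feasible Pmax x y p).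
Hypothesis partial_load : 0 < load y i0 < 1.

Local Notation y' := (fill_alloc y i0).
Local Notation p' := (fill_power y p i0).
Local Notation rate := (rate K B g sigma2).

Let D_neq0 : load y i0 != 0.
Proof. by case/andP: partial_load => /lt0r_neq0. Qed.

Let sinr_ge0 k j : 0 <= sinr g sigma2 y p k j.
Proof. exact: feasible_sinr_ge0 feas. Qed.

Lemma rate_term_fill_le k j :
  y k j * log2 (1 + sinr g sigma2 y p k j)
  <= y' k j * log2 (1 + sinr g sigma2 y' p' k j).
Proof.
rewrite sinr_fill // /fill_alloc; case: eqP => _; last by rewrite mul1r.
by apply: le_scaled_log2_1D => //; case: feas => _ _ _ /(_ k j) /andP[].
Qed.

Lemma rate_fill_le j : rate y p j <= rate y' p' j.
Proof. by rewrite ler_pM2l // ler_sum // => k _; apply: rate_term_fill_le. Qed.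

Lemma rate_fill_lt j : 0 < y i0 j -> 0 < sinr g sigma2 y p i0 j ->
  rate y p j < rate y' p' j.
Proof.
move=> y_gt0 sinr_gt0; rewrite ltr_pM2l //.
apply: (ler_ltr_sum (i0 := i0)) => [k|]; first exact: rate_term_fill_le.
by rewrite sinr_fill // /fill_alloc eqxx lt_scaled_log2_1D.
Qed.

Lemma utility_fill_lt (omega : 'I_nJ -> R) j0 : (forall j, 0 < omega j) ->
  (forall j, 0 < rate y p j) ->
  0 < y i0 j0 -> 0 < sinr g sigma2 y p i0 j0 ->
  utility K B g sigma2 omega y p < utility K B g sigma2 omega y' p'.
Proof.
move=> omega_gt0 rate_gt0 y_gt0 sinr_gt0.
have rate'_gt0 j : 0 < rate y' p' j := lt_le_trans (rate_gt0 j) (rate_fill_le j).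
apply: (ler_ltr_sum (i0 := j0)) => [j|]; rewrite ?ler_pM2l ?ltr_pM2l //.
  by rewrite ler_log2 ?posrE ?rate_fill_le.
by rewrite ltr_log2 ?posrE ?rate_fill_lt.
Qed.

End FillUp.
End Network.

Theorem theorem2 (R : realType) (nI nJ : nat) (K B sigma2 : R)
  (g : 'I_nI -> 'I_nJ -> R) (omega : 'I_nJ -> R) (Pmax : 'I_nI -> R)
  (hK : 0 < K) (hB : 0 < B) (hg : forall i j, 0 < g i j) (hs : 0 < sigma2)
  (homega : forall j, 0 < omega j) (hP : forall i, 0 < Pmax i)
  (x : 'I_nI -> 'I_nJ -> bool) (y : 'I_nI -> 'I_nJ -> R) (p : 'I_nI -> R) :
  optimal K B g sigma2 omega Pmax x y p ->
  forall i : 'I_nI, load y i = 0 \/ load y i = 1.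
Proof.
move=> [feas rate_gt0 opt] i0.
have [D0|D_neq0] := eqVneq (load y i0) 0; first by left.
have [D1|D_neq1] := eqVneq (load y i0) 1; first by right.
exfalso; case: (feas) => _ _ load_bounds y_bounds.
have partial_load : 0 < load y i0 < 1.
  case/andP: (load_bounds i0) => D_ge0 D_le1.
  by rewrite lt0r lt_neqAle D_neq0 D_neq1 D_ge0 D_le1.
have y_ge0 j : 0 <= y i0 j by case/andP: (y_bounds i0 j).
have [j0 /= y_gt0] := psumr_neq0P (fun j _ => y_ge0 j) (elimN eqP D_neq0).
have KB_gt0 : 0 < K * B by rewrite mulr_gt0.
have g_ge0 i j : 0 <= g i j by exact: ltW.
have sigma2_ge0 := ltW hs.
have sinr_gt0 := served_sinr_gt0 g_ge0 sigma2_ge0 feas y_gt0 (rate_gt0 j0).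
have rate_le := rate_fill_le KB_gt0 g_ge0 sigma2_ge0 feas partial_load.
have := opt x _ _ (feasible_fill feas (proj1 (andP partial_load)))
  (fun j => lt_le_trans (rate_gt0 j) (rate_le j)).
by rewrite leNgt (utility_fill_lt KB_gt0 g_ge0 sigma2_ge0 feas partial_load
  homega rate_gt0 y_gt0 sinr_gt0) //.
Qed.
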